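(* Let $A\in\mathbb{C}^{n\times n}$, $f\in\mathbb{C}^n$, $z, z_0\in\mathbb{C}$, $\delta\in\mathbb{R}$ and an integer $q\ge 1$. Define the polynomial \[ \tilde{p}(\lambda) = \sum_{j=0}^{q}\frac{(-\mathrm{i}\delta(\lambda-z_0))^j}{j!}, \] and assume $\tilde p(z)\neq 0$. Given $y^{(0)}\in\mathbb{C}^n$, define iterates $y^{(m)}$ by \[ \begin{aligned} k_1 &= -\mathrm{i}\delta\left((A-z_0I)y^{(m)} - f\right),\\ k_j &= \frac{-\mathrm{i}\delta}{j}\left((A-z_0I)k_{j-1}-\frac{(-\mathrm{i}\delta(z-z_0))^{j-1}}{(j-1)!}f\right),\quad j=2,\dots,q,\\ y^{(m+1)} &= \frac{y^{(m)} + \sum_{j=1}^{q} k_j }{\tilde{p}(z)}. \end{aligned} \] Let $y\in\mathbb{C}^n$ satisfy $(A-zI)y=f$. Then $y$ is a fixed point of this iteration (i.e. $y^{(m)}=y$ implies $y^{(m+1)}=y$), and for every $m\ge 0$, \[ y^{(m)} - y = \left(\frac{\tilde{p}(A)}{\tilde{p}(z)}\right)^m \left(y^{(0)} - y\right), \] where $\tilde p(A) = \sum_{j=0}^{q}\frac{(-\mathrm{i}\delta(A-z_0I))^j}{j!}$. *)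

(* The complex field C is modelled by an arbitrary
   numClosedFieldType (e.g. the complex numbers); the statement is purely
   algebraic. *)
From HB Require Import structures.
From mathcomp Require Import all_boot all_order all_algebra.
Set Implicit Arguments. Unset Strict Implicit. Unset Printing Implicit Defensive.
Import Order.TTheory GRing.Theory Num.Theory.
Local Open Scope ring_scope.

Section Iter.
Variables (C : numClosedFieldType) (n q : nat) (A : 'M[C]_n) (f : 'cV[C]_n)
          (z z0 : C) (delta : C).

Definition cfac : C := - 'i * delta.

Definition ptilde (lam : C) : C :=
  \sum_(j < q.+1) (cfac * (lam - z0)) ^+ j / (j`!)%:R.

Definition ptildeM : 'M[C]_n :=
  \sum_(j < q.+1) ((j`!)%:R)^-1 *: (cfac *: (A - z0%:M)) ^+ j.

(* kvec y i = k_{i+1} computed from the current iterate y *)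
Fixpoint kvec (y : 'cV[C]_n) (i : nat) : 'cV[C]_n :=
  match i with
  | 0 => cfac *: ((A - z0%:M) *m y - f)
  | i'.+1 => (cfac / (i'.+2)%:R) *:
               ((A - z0%:M) *m kvec y i'
                - ((cfac * (z - z0)) ^+ i'.+1 / ((i'.+1)`!)%:R) *: f)
  end.

Definition step (y : 'cV[C]_n) : 'cV[C]_n :=
  (ptilde z)^-1 *: (y + \sum_(i < q) kvec y i).

Definition iterate (y0 : 'cV[C]_n) (m : nat) : 'cV[C]_n := iter m step y0.

End Iter.

From Pilot Require Import Defs.
From HB Require Import structures.
From mathcomp Require Import all_boot all_order all_algebra.
From mathcomp Require Import ring.
Set Implicit Arguments. Unset Strict Implicit. Unset Printing Implicit Defensive.
Import Order.TTheory GRing.Theory Num.Theory.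
Local Open Scope ring_scope.

(* The map [step] is affine: unrolling the recursion, k_j is an affine
   function of the current iterate with linear part (c (A - z0 I))^j / j!,
   where c = -i delta, so [step u - step v = p~(A)/p~(z) (u - v)].  A
   solution y of (A - z I) y = f satisfies (A - z0 I) y - f = (z - z0) y,
   which turns every k_j into the scalar multiple (c (z - z0))^j / j! of y;
   hence [step y = p~(z) y / p~(z) = y], and the error y^(m) - y is
   multiplied by p~(A)/p~(z) at each step. *)

Lemma exprZmx (R : comNzRingType) (n : nat) (a : R) (B : 'M[R]_n) (k : nat) :
  (a *: B) ^+ k = a ^+ k *: B ^+ k.
Proof.
elim: k => [|k IHk]; first by rewrite !expr0 scale1r.
by rewrite !exprS IHk -!mulmxE -scalemxAl -scalemxAr scalerA.
Qed.

Section Iteration.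
Variables (C : numClosedFieldType) (n q : nat) (A : 'M[C]_n) (f : 'cV[C]_n).
Variables (z z0 delta : C).

Local Notation c := (cfac delta).
Local Notation kvec := (kvec A f z z0 delta).
Local Notation step := (step q A f z z0 delta).

Lemma kvecB u v i :
  kvec u i - kvec v i = (c ^+ i.+1 / (i.+1)`!%:R) *: ((A - z0%:M) ^+ i.+1 *m (u - v)).
Proof.
elim: i => [|i IHi] /=.
  by rewrite -scalerBr opprB addrA subrK -mulmxBr !expr1 divr1.
rewrite -scalerBr opprB addrA subrK -mulmxBr IHi -scalemxAr scalerA.
rewrite [X in _ *: (X *m _)]exprS -mulmxE -mulmxA; congr (_ *: _).
by rewrite [(i.+2)`!]factS natrM invfM mulrACA -exprS.
Qed.

Lemma stepB u v :
  step u - step v = ((ptilde q z0 delta z)^-1 *: ptildeM q A z0 delta) *m (u - v).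
Proof.
rewrite /Defs.step -scalerBr -scalemxAl; congr (_ *: _).
rewrite opprD addrACA -sumrB /ptildeM mulmx_suml big_ord_recl /=.
rewrite expr0 invr1 scale1r mul1mx; congr (_ + _).
apply: eq_bigr => i _; rewrite kvecB exprZmx scalerA -scalemxAl mulrC.
by rewrite /bump leq0n add1n.
Qed.

Variable y : 'cV[C]_n.
Hypothesis y_solves : (A - z%:M) *m y = f.

Lemma kvec_solution i :
  kvec y i = ((c * (z - z0)) ^+ i.+1 / (i.+1)`!%:R) *: y.
Proof.
have shifted_residual : (A - z0%:M) *m y - f = (z - z0) *: y.
  rewrite -y_solves -mulmxBl opprB addrC addrA subrK.
  by rewrite -(raddfB (@scalar_mx C n)) mul_scalar_mx.
elim: i => [|i IHi] /=; first by rewrite shifted_residual scalerA expr1 divr1.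
rewrite IHi -scalemxAr -scalerBr shifted_residual !scalerA; congr (_ *: _).
rewrite [(i.+2)`!]factS natrM invfM [in RHS]exprS.
by ring.
Qed.

Lemma step_solution : ptilde q z0 delta z != 0 -> step y = y.
Proof.
move=> ptilde_z_neq0; apply: (canLR (scalerK ptilde_z_neq0)).
rewrite /ptilde big_ord_recl /= scalerDl expr0 divr1 scale1r scaler_suml.
by congr (_ + _); apply: eq_bigr => i _; rewrite kvec_solution.
Qed.

End Iteration.

Theorem theorem4p2 (C : numClosedFieldType) (n q : nat) (A : 'M[C]_n)
    (f : 'cV[C]_n) (z z0 delta : C) (y0 y : 'cV[C]_n) :
  delta \is Num.real ->
  (1 <= q)%N ->
  ptilde q z0 delta z != 0 ->
  (A - z%:M) *m y = f ->
  step q A f z z0 delta y = y /\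
  (forall m : nat,
     iterate q A f z z0 delta y0 m - y
     = ((ptilde q z0 delta z)^-1 *: ptildeM q A z0 delta) ^+ m *m (y0 - y)).
Proof.
move=> _ _ ptilde_z_neq0 y_solves.
have y_fixed := step_solution y_solves ptilde_z_neq0.
split=> // m; elim: m => [|m IHm]; first by rewrite expr0 mul1mx.
rewrite /iterate iterS -/(iterate _ _ _ _ _ _ _ _).
by rewrite -{1}y_fixed stepB IHm exprS -mulmxE mulmxA.
Qed.
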